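(* Let $s,t\ge0$ be integers, let $S$ be any $s\times s$ integer matrix and $T$ any $t\times t$ integer matrix, and let $m,n,m',n'$ be positive integers with $m+n=m'+n'$. Then $H_{m,n}(z)-H_{m',n'}(z)$ is independent of $z$, i.e. it takes the same value for all integers $z$.
   Context: $h_k$ denotes the complete homogeneous symmetric function of degree $k$, with $h_0=1$ and $h_k=0$ for $k<0$. For integer matrices $S=(S_{ij})_{1\le i,j\le s}$, $T=(T_{ij})_{1\le i,j\le t}$, positive integers $m,n$ and any integer $z$, $H_{m,n}(z)$ is the determinant of the $(s+t+2)\times(s+t+2)$ matrix whose entries are as follows (rows and columns indexed $1,\dots,s+t+2$): - for $1\le i,j\le s$: $h_{S_{ij}}$; - row $s+1$, columns $1,\dots,s$: all $0$ except column $s$, which is $1$; rows $s+2,\dots,s+t+2$, columns $1,\dots,s$: $0$; - column $s+1$: $h_{S_{i,s}+m}$ in row $i\le s$, $h_m$ in row $s+1$, $h_z$ in row $s+2$, and $0$ in rows $>s+2$; - column $s+2$: $h_{S_{i,s}+m+n-z}$ in row $i\le s$, $h_{m+n-z}$ in row $s+1$, $h_n$ in row $s+2$, $1$ in row $s+3$ (if $t>0$), $0$ in rows $>s+3$; - column $s+2+j$ for $1\le j\le t$: $h_{S_{i,s}+m+n-z+T_{1j}}$ in row $i\le s$, $h_{m+n-z+T_{1j}}$ in row $s+1$, $h_{n+T_{1j}}$ in row $s+2$, and $h_{T_{ij}}$ in row $s+2+i$ for $1\le i\le t$. *)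

From HB Require Import structures.
From mathcomp Require Import all_boot all_order all_algebra.
Set Implicit Arguments. Unset Strict Implicit. Unset Printing Implicit Defensive.
Import Order.TTheory GRing.Theory Num.Theory.
Local Open Scope ring_scope.

(* Entry (i,j) of an integer matrix, accessed with 1-based nat indices;
   0 outside the range (never used out of range below). *)
Definition mget (k : nat) (M : 'M[int]_k) (i j : nat) : int :=
  match @insub nat (fun x => x < k)%N 'I_k i.-1,
        @insub nat (fun x => x < k)%N 'I_k j.-1 with
  | Some i', Some j' => M i' j'
  | _, _ => 0
  end.

(* The entries of the matrix defining H_{m,n}(z), with 1-based indices
   i, j in 1..s+t+2.  [h] plays the role of the complete homogeneous
   symmetric functions h_k (k : int). *)
Definition Hentry (R : comRingType) (h : int -> R) (s t : nat)
  (S : 'M[int]_s) (T : 'M[int]_t) (m n : nat) (z : int) (i j : nat) : R :=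
  let Sis := mget S i s in
  let mz := (m%:Z + n%:Z - z)%R in
  if (j <= s)%N then
    (if (i <= s)%N then h (mget S i j)
     else if i == s.+1 then (if j == s then 1 else 0) else 0)
  else if j == s.+1 then
    (if (i <= s)%N then h (Sis + m%:Z)
     else if i == s.+1 then h m%:Z
     else if i == s.+2 then h z else 0)
  else if j == s.+2 then
    (if (i <= s)%N then h (Sis + mz)
     else if i == s.+1 then h mz
     else if i == s.+2 then h n%:Z
     else if i == s.+3 then 1 else 0)
  else (* j = s+2+j' with 1 <= j' <= t *)
    let j' := (j - s.+2)%N in
    let T1j := mget T 1 j' in
    (if (i <= s)%N then h (Sis + mz + T1j)
     else if i == s.+1 then h (mz + T1j)
     else if i == s.+2 then h (n%:Z + T1j)
     else h (mget T (i - s.+2)%N j')).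

Definition Hdet (R : comRingType) (h : int -> R) (s t : nat)
  (S : 'M[int]_s) (T : 'M[int]_t) (m n : nat) (z : int) : R :=
  \det (\matrix_(i < s + t + 2, j < s + t + 2)
          Hentry h S T m n z i.+1 j.+1).

From HB Require Import structures.
From mathcomp Require Import all_boot all_order all_algebra all_fingroup.
Set Implicit Arguments. Unset Strict Implicit. Unset Printing Implicit Defensive.
Import GRing.Theory.
Local Open Scope ring_scope.

(* Expand both determinants by the Leibniz formula and compare
   them permutation by permutation.  The only entry of the matrix depending
   on z alone is h_z, sitting at (row s+2, column s+1); the entries depending
   on m and n separately (and not only through m+n) all lie in row s+2 or in
   column s+1.  Fix a permutation sigma.
   - If sigma picks the slot (s+2, s+1), all the other entries it picks avoid
     row s+2 and column s+1, so its product is the same for (m,n) and (m',n');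
     its contribution to H_{m,n}(z) - H_{m',n'}(z) vanishes for every z.
   - Otherwise, either sigma picks a zero entry of the lower-left block (rows
     >= s+2, columns <= s+1), or it maps the rows >= s+2 onto the columns
     >= s+2 and hence (being a bijection) the rows <= s+1 onto the columns
     <= s+1; in both cases its product does not depend on z. *)

(* A permutation sending a set into itself also sends its complement into
   the complement: this is the counting step of the second case. *)
Lemma perm_stable_compl (T : finType) (sg : {perm T}) (B : {set T}) :
  {in B, forall x, sg x \in B} -> {in ~: B, forall x, sg x \in ~: B}.
Proof.
move=> sgB x; rewrite !inE => xNB; apply/negP => sgxB.
have im_sgB : sg @: B = B.
  apply/eqP; rewrite eqEcard card_imset; last exact: perm_inj.
  by rewrite leqnn andbT; apply/subsetP => _ /imsetP[y yB ->]; exact: sgB.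
move: sgxB; rewrite -{1}im_sgB => /imsetP[y yB /perm_inj exy].
by move: xNB; rewrite exy yB.
Qed.

Section HdetPermutationTerms.
Variables (R : comNzRingType) (h : int -> R) (s t : nat)
  (S : 'M[int]_s) (T : 'M[int]_t).

(* Entries off row s+2 and column s+1, as well as the slot h_z at their
   crossing, depend on (m, n) only through m + n (indices are 1-based). *)
Lemma Hentry_sum_invariant m n m' n' z i j : (m + n = m' + n')%N ->
  (i == s.+2) = (j == s.+1) ->
  Hentry h S T m n z i j = Hentry h S T m' n' z i j.
Proof.
move=> mn_eq ij_cross.
have mnZ_eq : (m%:Z + n%:Z = m'%:Z + n'%:Z)%R by rewrite -!PoszD mn_eq.
rewrite /Hentry mnZ_eq.
case: eqP ij_cross => [-> | _] <- //=.
by rewrite ltnNge leqnSn (gtn_eqF (ltnSn _)).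
Qed.

Lemma Hentry_z_invariant m n z1 z2 i j :
  ((i <= s.+1)%N -> (j <= s.+1)%N) -> ~~ ((i == s.+2) && (j == s.+1)) ->
  Hentry h S T m n z1 i j = Hentry h S T m n z2 i j.
Proof.
move=> upper_left not_hz; rewrite /Hentry.
case: (leqP j s) => // s_lt_j.
case: (eqVneq j s.+1) => [j_eq | j_neq].
  by move: not_hz; rewrite j_eq eqxx andbT => /negbTE ->.
have s1_lt_j : (s.+1 < j)%N by rewrite ltn_neqAle eq_sym j_neq.
have s1_lt_i : (s.+1 < i)%N.
  by rewrite ltnNge; apply: contraL s1_lt_j => /upper_left; rewrite -leqNgt.
by rewrite (leqNgt i) (ltnW s1_lt_i) (gtn_eqF s1_lt_i).
Qed.

Lemma Hentry_lower_left m n z i j : (s.+2 <= i)%N -> (j <= s.+1)%N ->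
  ~~ ((i == s.+2) && (j == s.+1)) -> Hentry h S T m n z i j = 0.
Proof.
move=> lower left not_hz.
rewrite /Hentry (leqNgt i) (ltnW lower) (gtn_eqF lower).
case: (leqP j s) => // s_lt_j.
have j_eq : j = s.+1 by apply/eqP; rewrite eqn_leq left s_lt_j.
by move: not_hz; rewrite j_eq eqxx andbT => /negbTE ->.
Qed.

Let N := (s + t + 2)%N.

(* The row (0-based index s+1) carrying h_z. *)
Lemma hz_row_proof : (s.+1 < N)%N.
Proof. by rewrite /N addn2 !ltnS leq_addr. Qed.

Definition hz_row : 'I_N := Ordinal hz_row_proof.

Definition Hterm m n z (sg : {perm 'I_N}) : R :=
  \prod_i Hentry h S T m n z (val i).+1 (val (sg i)).+1.

Lemma Hdet_Leibniz m n z :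
  Hdet h S T m n z = \sum_(sg : {perm 'I_N}) (-1) ^+ sg * Hterm m n z sg.
Proof.
rewrite /Hdet /determinant; apply: eq_bigr => sg _.
by congr (_ * _); apply: eq_bigr => i _; rewrite mxE.
Qed.

Lemma Hterm_hz_picked (sg : {perm 'I_N}) m n m' n' z :
  (m + n = m' + n')%N -> val (sg hz_row) = s ->
  Hterm m n z sg = Hterm m' n' z sg.
Proof.
move=> mn_eq sg_hz; apply: eq_bigr => i _; apply: Hentry_sum_invariant => //.
have [-> | i_neq] := eqVneq i hz_row; first by rewrite sg_hz !eqxx.
have -> : ((val i).+1 == s.+2) = false.
  by apply: contraNF i_neq => /eqP[i_eq]; apply/eqP/val_inj.
apply/esym; apply: contraNF i_neq => /eqP[sgi_eq].
by apply/eqP/(@perm_inj _ sg)/val_inj; rewrite sg_hz; exact: sgi_eq.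
Qed.

Lemma Hterm_hz_avoided (sg : {perm 'I_N}) m n z1 z2 :
  val (sg hz_row) != s -> Hterm m n z1 sg = Hterm m n z2 sg.
Proof.
move=> sg_hz.
have not_hz (i : 'I_N) : ~~ (((val i).+1 == s.+2) && ((val (sg i)).+1 == s.+1)).
  apply/negP => /andP[/eqP[i_eq] /eqP[sgi_eq]].
  have i_hz : i = hz_row by exact: val_inj.
  by move: sg_hz; rewrite -i_hz; apply/negP; rewrite negbK; apply/eqP.
pose lower := [set i : 'I_N | (s < val i)%N].
have [[i /andP[i_low sgi_left]] | /existsPn lower_stable] :=
  altP (@existsP _ (fun i : 'I_N => (s < val i)%N && (val (sg i) <= s)%N)).
  rewrite /Hterm (bigD1 i) //= [in RHS](bigD1 i) //=.
  by rewrite !(@Hentry_lower_left m n) ?mul0r ?not_hz.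
have upper_stable : {in ~: lower, forall i, sg i \in ~: lower}.
  apply: perm_stable_compl => i; rewrite !inE => i_low.
  by have := lower_stable i; rewrite negb_and i_low ltnNge.
apply: eq_bigr => i _; apply: Hentry_z_invariant => // i_up.
by have := upper_stable i; rewrite !inE -!leqNgt !ltnS; exact.
Qed.

End HdetPermutationTerms.

Theorem lemma2p4 (R : comRingType) (h : int -> R)
  (h0 : h 0 = 1) (hneg : forall k : int, k < 0 -> h k = 0)
  (s t : nat) (S : 'M[int]_s) (T : 'M[int]_t) (m n m' n' : nat)
  (hm : (0 < m)%N) (hn : (0 < n)%N) (hm' : (0 < m')%N) (hn' : (0 < n')%N)
  (hmn : (m + n = m' + n')%N) (z1 z2 : int) :
  Hdet h S T m n z1 - Hdet h S T m' n' z1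
  = Hdet h S T m n z2 - Hdet h S T m' n' z2.
Proof.
rewrite !Hdet_Leibniz -!sumrB; apply: eq_bigr => sg _; rewrite -!mulrBr.
have [sg_hz | sg_hz] := eqVneq (val (sg (hz_row s t))) s.
  by rewrite !(Hterm_hz_picked h S T z1 hmn sg_hz)
    !(Hterm_hz_picked h S T z2 hmn sg_hz) !subrr.
by rewrite (Hterm_hz_avoided h S T m n z1 z2 sg_hz)
  (Hterm_hz_avoided h S T m' n' z1 z2 sg_hz).
Qed.
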